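(* Let $w \in S_n$. If $w$ contains a $231$ pattern, then the Schubert polynomial $\mathfrak{S}_w$ is not a complete homogeneous monomial.
   Context: $h^i_j$ is the complete homogeneous symmetric polynomial of degree $j$ in $x_1,\dots,x_i$; a complete homogeneous monomial is a product $h^1_{a_1}h^2_{a_2}\cdots$ with nonnegative integers $a_i$, finitely many nonzero. Schubert polynomials: $\mathfrak{S}_{w_0} = x_1^{n-1}\cdots x_{n-1}$ for the longest $w_0 \in S_n$, and $\partial_i\mathfrak{S}_w = \mathfrak{S}_{ws_i}$ if $\ell(ws_i)=\ell(w)-1$, $0$ otherwise, where $\partial_i f = (f-s_if)/(x_i-x_{i+1})$. $w$ contains a $231$ pattern if there are $i<j<k$ with $w(k)<w(i)<w(j)$. *)

From HB Require Import structures.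
From mathcomp Require Import all_boot all_order all_algebra all_fingroup.
From mathcomp Require Import mpoly.
Set Implicit Arguments. Unset Strict Implicit. Unset Printing Implicit Defensive.
Import GRing.Theory.
Local Open Scope ring_scope.

(* Polynomials in x_1..x_n are '{mpoly int[n]}'; variable x_(k+1) is 'X_k, k : 'I_n.
   Permutations w in S_n are {perm 'I_n}, acting on {0,..,n-1}. *)

Definition ell n (w : {perm 'I_n}) : nat :=
  #|[set p : 'I_n * 'I_n | (p.1 < p.2)%N && (w p.2 < w p.1)%N]|.

Definition contains231 n (w : {perm 'I_n}) : Prop :=
  exists i j k : 'I_n, [/\ (i < j)%N, (j < k)%N, (w k < w i)%N & (w i < w j)%N].

Definition w0 n : {perm 'I_n} := perm (@rev_ord_inj n).

Definition simple_tr n (i j : 'I_n) : {perm 'I_n} := tperm i j.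

Definition staircase n : {mpoly int[n]} := \prod_(k < n) 'X_k ^+ (n - k.+1)%N.

(* dd i j f g  <->  g = (f - s f) / (x_i - x_j), where s swaps x_i and x_j
   (used with j = i+1); i.e. g is the divided difference of f.
   Since {mpoly int[n]} is an integral domain, g is uniquely determined. *)
Definition is_ddiff n (i j : 'I_n) (f g : {mpoly int[n]}) : Prop :=
  ('X_i - 'X_j) * g = f - msym (simple_tr i j) f.

(* S is the family of Schubert polynomials of S_n:
   S_{w0} = x_1^{n-1}...x_{n-1}, and
   d_i S_w = S_{w s_i} if l(w s_i) = l(w) - 1, and 0 otherwise.
   (w s_i as a function is w o s_i, which is (s_i * w)%g in mathcomp.) *)
Definition is_schubert_family n (S : {perm 'I_n} -> {mpoly int[n]}) : Prop :=
  S (w0 n) = staircase n /\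
  forall (w : {perm 'I_n}) (i j : 'I_n), (i.+1 = j :> nat) ->
    let ws := (simple_tr i j * w)%g in
    is_ddiff i j (S w) (if (ell ws + 1 == ell w)%N then S ws else 0).

Definition hcomp n (i j : nat) : {mpoly int[n]} :=
  \sum_(m : 'X_{1..n < j.+1} |
        (mdeg m == j) && [forall k : 'I_n, (i <= k)%N ==> (m k == 0%N)]) 'X_[m].

Definition is_complete_hom_monomial n (p : {mpoly int[n]}) : Prop :=
  exists a : 'I_n -> nat, p = \prod_(k < n) hcomp n k.+1 (a k).

(* Write S_w = Z * h^1_{c_0} ... h^n_{c_(n-1)} with Z nonzero and symmetric.  Every Schubert
   polynomial is nonzero: starting from S_{w0} = x^delta and always applying the divided
   difference at the first drop of the exponent, S stays a monomial down to the identity.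
   The divided-difference relations then constrain the factorization: c_x = 0 at an ascent x
   of w, c_x > 0 at a descent, and at a descent x ending a descending run, d_x turns
   h^{x+1}_{c_x} into h^{x+2}_{c_x - 1}, so S_{w s_x} factors in the same way.  A 231 pattern
   of w can always be carried over to w s_x for such an x, except when it sits in consecutive
   positions y, y+1, y+2 with y+1 ending a run; then w s_{y+1} has a descent at y where
   c_y = 0, which forces a Schubert polynomial to vanish.  As each move lowers the length,
   no w containing 231 can be of this form. *)

From mathcomp Require Import all_boot all_algebra all_fingroup mpoly.
From mathcomp Require Import zify.
Set Implicit Arguments. Unset Strict Implicit. Unset Printing Implicit Defensive.

(** * Adjacent swaps and 231 patterns of functions on nat *)

Section AdjacentCombinatorics.
Variable n : nat.
Implicit Types (f h : nat -> nat) (x y : nat).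

Definition descent f x := (x.+1 < n) && (f x.+1 < f x).

Definition swap_adj x y := if y == x then x.+1 else if y == x.+1 then x else y.

Definition pattern231 f p q r := [/\ p < q, q < r, r < n, f r < f p & f p < f q].

Definition has231 f := exists p q r, pattern231 f p q r.

Definition blocked231 f y :=
  [/\ f y < f y.+1, f y.+2 < f y, descent f y.+1 & ~~ descent f y.+2].

Lemma exists_crossing f a q r : q <= r -> a <= f q -> f r < a ->
  exists t, [/\ q <= t, t < r, a <= f t & f t.+1 < a].
Proof.
elim: r => [|r IH] le_qr le_a lt_a.
  by move: le_qr le_a; rewrite leqn0 => /eqP ->; lia.
have le_qr' : q <= r by case: (eqVneq q r.+1) => [eq_q|]; [subst q|]; lia.
have [lt_r|le_r] := ltnP (f r) a; last by exists r; split => //; lia.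
by have [t [? ? ? ?]] := IH le_qr' le_a lt_r; exists t; split => //; lia.
Qed.

Lemma descent_run_end f k : descent f k ->
  exists a, [/\ k <= a, descent f a, ~~ descent f a.+1 &
                forall m, k <= m <= a -> descent f m].
Proof.
have [d] := ubnP (n - k); elim: d k => // d IH k lt_d desc_k.
have [desc_k1|] := boolP (descent f k.+1); last first.
  by exists k; split => // m le_m; have -> : m = k by lia.
have lt_d' : n - k.+1 < d by move: desc_k1; rewrite /descent; lia.
have [a [le_ka desc_a ndesc_a run]] := IH k.+1 lt_d' desc_k1.
exists a; split => //; first lia.
by move=> m le_m; case: (eqVneq m k) => [->|ne_mk] //; apply: run; lia.
Qed.

Lemma swap_adjK x : involutive (swap_adj x).
Proof.
move=> y; rewrite /swap_adj.
case: (y =P x) => [->|ne_x]; last case: (y =P x.+1) => [->|ne_x1];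
  by rewrite ?eqxx; repeat case: eqP => ? //=; lia.
Qed.

Lemma swap_adj_lt x a b : a < b -> (a, b) != (x, x.+1) -> swap_adj x a < swap_adj x b.
Proof. by rewrite /swap_adj xpair_eqE => lt_ab; repeat case: eqP => ? //=; lia. Qed.

Lemma swap_adj_ltn x y : x.+1 < n -> y < n -> swap_adj x y < n.
Proof. by rewrite /swap_adj; repeat case: eqP => ? //=; lia. Qed.

Lemma has231_swap_adj f x p q r : x.+1 < n -> pattern231 f p q r ->
  (p, q) != (x, x.+1) -> (q, r) != (x, x.+1) -> has231 (f \o swap_adj x).
Proof.
move=> lt_x [lt_pq lt_qr lt_r lt_rp lt_pq'] ne_pq ne_qr.
exists (swap_adj x p), (swap_adj x q), (swap_adj x r).
split; rewrite /= ?swap_adjK //.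
- exact: swap_adj_lt.
- exact: swap_adj_lt.
- exact: swap_adj_ltn.
Qed.

Lemma eq_has231 f h : (forall y, y < n -> f y = h y) -> has231 f -> has231 h.
Proof.
move=> eq_fh [p [q [r [lt_pq lt_qr lt_r]]]].
by rewrite !eq_fh; try lia; exists p, q, r.
Qed.

Section Injective.
Variable f : nat -> nat.
Hypothesis f_inj : {in [pred x | x < n] &, injective f}.

Lemma has231_adjacent : has231 f ->
  exists p q, [/\ p < q, q.+1 < n, f q.+1 < f p & f p < f q].
Proof.
move=> [p [q [r [lt_pq lt_qr lt_r lt_rp lt_pq']]]].
have [t [le_qt lt_tr le_pt lt_tp]] :=
  @exists_crossing f (f p) q r (ltnW lt_qr) (ltnW lt_pq') lt_rp.
exists p, t; split => //; try lia.
by rewrite ltn_neqAle le_pt andbT; apply/eqP => /f_inj; rewrite !inE; lia.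
Qed.

Lemma has231_reduce : has231 f ->
  (exists y, blocked231 f y) \/
  exists x, [/\ descent f x, ~~ descent f x.+1 & has231 (f \o swap_adj x)].
Proof.
(* From a pattern (p, q, q+1): move at the end of the descending run through q+1 if there
   is one, otherwise compare f (q-1) with f q and f (q+1). *)
move=> /has231_adjacent [p [q [lt_pq lt_q lt_qp lt_pq']]].
have desc_q : descent f q by rewrite /descent lt_q; lia.
have [desc_q1|ndesc_q1] := boolP (descent f q.+1).
  have [a [le_qa desc_a ndesc_a _]] := descent_run_end desc_q1.
  right; exists a; split => //; apply: (@has231_swap_adj _ _ p q q.+1);
    try split; rewrite ?xpair_eqE //; move: desc_a; rewrite /descent; lia.
have [y eq_q] : exists y, q = y.+1 by exists q.-1; lia.
subst q.
have [desc_y|asc_y|eq_y] := ltngtP (f y.+1) (f y).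
- have lt_py : p < y by case: (eqVneq p y) => [eq_p|]; [subst p|]; lia.
  right; exists y.+1; split => //; apply: (@has231_swap_adj _ _ p y y.+2);
    try split; rewrite ?xpair_eqE //; lia.
- have [lt_y2|gt_y2|eq_y2] := ltngtP (f y.+2) (f y).
  + by left; exists y.
  + have lt_py : p < y by case: (eqVneq p y) => [eq_p|]; [subst p|]; lia.
    have [t [le_pt lt_ty ge_t lt_t]] :=
      @exists_crossing f (f p) p y (ltnW lt_py) (leqnn _) ltac:(lia).
    have desc_t : descent f t by rewrite /descent; lia.
    have [b [le_tb desc_b ndesc_b run]] := descent_run_end desc_t.
    have lt_by : b < y.
      case: (ltnP b y) => // le_yb.
      by have := run y; rewrite /descent; lia.
    right; exists b; split => //; apply: (@has231_swap_adj _ _ p y.+1 y.+2);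
      try split; rewrite ?xpair_eqE //; move: desc_b; rewrite /descent; lia.
  + by move/f_inj: eq_y2; rewrite !inE; lia.
- by move/f_inj: eq_y; rewrite !inE; lia.
Qed.

End Injective.

Lemma increasing_id f : (forall x, x < n -> f x < n) ->
  (forall x, x.+1 < n -> f x < f x.+1) -> forall x, x < n -> f x = x.
Proof.
move=> lt_f incr.
have ge_f x : x < n -> x <= f x.
  by elim: x => // x IH lt_x; have := IH (ltnW lt_x); have := incr x lt_x; lia.
have le_f d : d < n -> f (n - d.+1) <= n - d.+1.
  elim: d => [|d IH] lt_d; first by have := lt_f (n - 1); lia.
  have eq_d : (n - d.+2).+1 = n - d.+1 by lia.
  by have := incr (n - d.+2); rewrite eq_d; have := IH (ltnW lt_d); lia.
move=> x lt_x; have := le_f (n - x.+1); have -> : n - (n - x.+1).+1 = x by lia.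
by have := ge_f x lt_x; lia.
Qed.

Definition stair c := forall x, x.+1 < n -> c x.+1 <= c x <= (c x.+1).+1.

Lemma eq_stair c c' : (forall x, x < n -> c x = c' x) -> stair c -> stair c'.
Proof. by move=> eq_c st x lt_x; rewrite -!eq_c //; [exact: st | lia]. Qed.

Lemma stair_first_drop c k : stair c -> k < n -> c n.-1 < c k ->
  exists i, [/\ i.+1 < n, c i = (c i.+1).+1 & forall m, m < i -> c m = c m.+1].
Proof.
move=> st lt_k lt_c.
have [t [_ lt_t ge_t drop_t]] :=
  @exists_crossing c (c k) k n.-1 ltac:(lia) (leqnn _) lt_c.
have drop : exists x, (x.+1 < n) && (c x.+1 < c x) by exists t; lia.
have [i /andP[lt_i drop_i] min_i] := ex_minnP drop.
exists i; split => //; first by have := st i lt_i; lia.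
by move=> m lt_m; have := min_i m; have := st m ltac:(lia); lia.
Qed.

Lemma stair_dec_first_drop c i : stair c -> i.+1 < n -> c i = (c i.+1).+1 ->
  (forall m, m < i -> c m = c m.+1) ->
  stair (fun x => if x == i then (c x).-1 else c x).
Proof.
move=> st lt_i drop_i flat x lt_x; have := st x lt_x.
case: (eqVneq x i) => [->|ne_xi].
  by rewrite drop_i; case: eqP; lia.
case: (eqVneq x.+1 i) => [eq_x|] //; rewrite -eq_x in drop_i.
by have := flat x; rewrite -eq_x; lia.
Qed.

End AdjacentCombinatorics.

Lemma sum1_ord_gt n (a : 'I_n) : \sum_(b < n | a < b) 1 = n - a.+1.
Proof.
rewrite big_mkcond /= -(big_mkord xpredT (fun b => nat_of_bool (a < b))).
rewrite (@big_cat_nat _ _ _ a.+1) //= big_nat_cond big1 ?add0n => [|b]; last by lia.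
by rewrite (eq_big_nat _ _ (F2 := fun _ => 1)) ?sum_nat_const_nat ?muln1 // => b; lia.
Qed.

(** * Permutations of 'I_n as functions on nat *)

Section PermutationsAsFunctions.
Variable n' : nat.
Local Notation n := n'.+1.
Implicit Types (u : {perm 'I_n}) (x y : nat).

(* Only meaningful for x < n: [inord] sends larger x to 0. *)
Definition nat_perm u x : nat := u (inord x).

Definition adj_tr x : {perm 'I_n} := tperm (inord x) (inord x.+1).

Lemma inord_eq x y : x < n -> y < n -> ((inord x : 'I_n) == inord y) = (x == y).
Proof. by move=> lt_x lt_y; rewrite -val_eqE /= !inordK. Qed.

Lemma inord_succ x : x.+1 < n -> (inord x : 'I_n).+1 = (inord x.+1 : 'I_n) :> nat.
Proof. by move=> lt_x; rewrite !inordK //; lia. Qed.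

Lemma inord_neq_succ x : x.+1 < n -> (inord x : 'I_n) != inord x.+1.
Proof. by move=> lt_x; rewrite inord_eq //; lia. Qed.

Lemma nat_perm_inj u : {in [pred x | x < n] &, injective (nat_perm u)}.
Proof.
move=> x y lt_x lt_y /val_inj /perm_inj /(congr1 val).
by rewrite /= !inordK.
Qed.

Lemma adj_tr_inord x y : x.+1 < n -> y < n ->
  adj_tr x (inord y) = inord (swap_adj x y).
Proof.
move=> lt_x lt_y; rewrite /adj_tr /swap_adj.
case: (eqVneq y x) => [->|ne_x]; first by rewrite tpermL.
case: (eqVneq y x.+1) => [->|ne_x1]; first by rewrite tpermR.
by rewrite tpermD // inord_eq //; lia.
Qed.

Lemma nat_perm_adj_tr u x y : x.+1 < n -> y < n ->
  nat_perm (adj_tr x * u) y = nat_perm u (swap_adj x y).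
Proof. by move=> lt_x lt_y; rewrite /nat_perm permM adj_tr_inord. Qed.

Lemma contains231E u : contains231 u <-> has231 n (nat_perm u).
Proof.
split=> [[i [j [k [lt_ij lt_jk lt_ki lt_ij']]]] | [p [q [r [? ? ? lt_rp lt_pq]]]]].
  by exists i, j, k; split; rewrite /nat_perm ?inord_val.
have [lt_p lt_q] : p < n /\ q < n by lia.
by exists (inord p), (inord q), (inord r); rewrite !inordK.
Qed.

Lemma ascent_of_not_descent u x : x.+1 < n -> ~~ descent n (nat_perm u) x ->
  nat_perm u x < nat_perm u x.+1.
Proof.
rewrite /descent => lt_x /nandP[|]; rewrite ?lt_x // -leqNgt leq_eqVlt.
by case/orP=> [/eqP/esym/nat_perm_inj|//]; rewrite !inE; lia.
Qed.

Lemma tperm_adj_val (i j a : 'I_n) : i.+1 = j :> nat -> tperm i j a = swap_adj i a :> nat.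
Proof.
move=> ij; have lt_i : i.+1 < n by rewrite ij.
have := adj_tr_inord lt_i (ltn_ord a); rewrite /adj_tr ij !inord_val => ->.
by rewrite inordK //; exact: swap_adj_ltn.
Qed.

Lemma tperm_adj_ltn (i j a b : 'I_n) : i.+1 = j :> nat -> a < b -> (a, b) != (i, j) ->
  tperm i j a < tperm i j b.
Proof.
move=> ij lt_ab ne; rewrite !tperm_adj_val //; apply: swap_adj_lt => //.
by move: ne; rewrite !xpair_eqE -!val_eqE /= -ij.
Qed.

Lemma ell_tperm_adj (i j : 'I_n) u : i.+1 = j :> nat ->
  ell (tperm i j * u) + (u j < u i) = ell u + (u i < u j).
Proof.
move=> ij; have lt_ij : i < j by rewrite -ij.
have tperm_pairs a b : ((a, b) != (i, j)) && (a < b) ->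
    ((tperm i j a, tperm i j b) != (i, j)) && (tperm i j a < tperm i j b).
  case/andP=> ne lt_ab; rewrite tperm_adj_ltn // andbT xpair_eqE.
  apply/andP => -[/eqP ta /eqP tb]; move: lt_ab.
  by rewrite -(tpermK i j a) -(tpermK i j b) ta tb tpermL tpermR ltnNge (ltnW lt_ij).
pose tt (p : 'I_n * 'I_n) := (tperm i j p.1, tperm i j p.2).
have ttK : involutive tt by move=> [a b]; rewrite /tt /= !tpermK.
rewrite /ell (cardsD1 (i, j)) [in RHS](cardsD1 (i, j)) !inE /= !permM tpermL tpermR lt_ij.
have -> : [set p : 'I_n * 'I_n | p.1 < p.2 & (tperm i j * u)%g p.2 < (tperm i j * u)%g p.1]
            :\ (i, j) =
          tt @^-1: ([set p : 'I_n * 'I_n | p.1 < p.2 & u p.2 < u p.1] :\ (i, j)).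
  apply/setP => -[a b]; rewrite !inE /tt /= !permM.
  case: (u (tperm i j b) < u (tperm i j a)); rewrite ?andbF // !andbT.
  by apply/idP/idP => [/tperm_pairs // | /tperm_pairs]; rewrite !tpermK.
by rewrite card_preimset /=; [lia | exact: can_inj ttK].
Qed.

Lemma ell_adj_tr_descent u x : descent n (nat_perm u) x -> ell (adj_tr x * u) + 1 = ell u.
Proof.
case/andP=> lt_x desc; have := ell_tperm_adj u (inord_succ lt_x).
by rewrite -/(adj_tr x) desc ltnNge (ltnW desc) addn0.
Qed.

Lemma perm1_or_descent u : u = 1%g \/ exists x, descent n (nat_perm u) x.
Proof.
have [/hasP[x _ desc]|/hasPn no_desc] := boolP (has (descent n (nat_perm u)) (iota 0 n)).
  by right; exists x.
left; apply/permP => a; apply: val_inj; rewrite perm1 /=.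
have := @increasing_id n (nat_perm u) (fun x _ => ltn_ord _) _ a (ltn_ord a).
rewrite /nat_perm inord_val => -> // x lt_x.
by apply: ascent_of_not_descent => //; apply: no_desc; rewrite mem_iota; lia.
Qed.

Lemma ell_eq0 u : ell u = 0 -> u = 1%g.
Proof.
case: (perm1_or_descent u) => [//|[x /ell_adj_tr_descent]]; lia.
Qed.

Lemma ell_w0 : ell (w0 n) = \sum_(k < n) (n - k.+1).
Proof.
have -> : ell (w0 n) = #|[set p : 'I_n * 'I_n | p.1 < p.2]|.
  apply: eq_card => -[a b]; rewrite !inE /w0 !permE /=.
  by case: (ltnP a b) => le_ab //=; have := ltn_ord a; have := ltn_ord b; lia.
rewrite -sum1dep_card -(pair_big_dep xpredT (fun a b : 'I_n => a < b) (fun _ _ => 1)) /=.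
by apply: eq_bigr => a _; rewrite sum1_ord_gt.
Qed.

End PermutationsAsFunctions.

Arguments adj_tr {n'} x.

(** * Complete homogeneous polynomials *)

Import GRing.Theory.
Local Open Scope ring_scope.

Section CompleteHomogeneous.
Variable n : nat.
Local Notation P := {mpoly int[n]}.
Implicit Types (i j : 'I_n) (m e : 'X_{1..n}) (p : P).

Definition supp_below k m := [forall l : 'I_n, (k <= l)%N ==> (m l == 0%N)].

Lemma mcoeff_hcomp k d m : (hcomp n k d)@_m = ((mdeg m == d) && supp_below k m)%:R.
Proof.
rewrite /hcomp raddf_sum /=; under eq_bigr => m' _ do rewrite mcoeffX.
have [hm|hm] := boolP ((mdeg m == d) && supp_below k m); last first.
  by rewrite big1 // => m' hm'; case: eqP => // eq_m; move: hm; rewrite -eq_m hm'.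
have lt_m : (mdeg m < d.+1)%N by case/andP: hm => /eqP ->.
rewrite (bigD1 (BMultinom lt_m)) //= eqxx big1 ?addr0 // => m' /andP[_ ne_m].
by case: eqP => // eq_m; case/eqP: ne_m; apply: val_inj.
Qed.

Lemma supp_below_succ k j m : j = k :> nat ->
  supp_below k m = (m j == 0%N) && supp_below k.+1 m.
Proof.
move=> eq_j; apply/forallP/andP => [supp|[/eqP m_j /forallP supp] l].
  split; first by have := supp j; rewrite eq_j leqnn.
  by apply/forallP => l; apply/implyP => lt_l; apply: (implyP (supp l)); exact: ltnW.
apply/implyP; rewrite leq_eqVlt => /orP[/eqP eq_l|lt_l]; last exact: (implyP (supp l)).
by rewrite (_ : l = j) ?m_j //; apply: val_inj; rewrite /= eq_j.
Qed.

Lemma supp_below_perm (s : {perm 'I_n}) k m : (forall l, (k <= s l) = (k <= l))%N ->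
  supp_below k [multinom m (s l) | l < n] = supp_below k m.
Proof.
move=> s_k; apply/forallP/forallP => supp l; apply/implyP => le_kl.
  by have := supp (s^-1 l)%g; rewrite mnmE permKV -s_k permKV le_kl.
by have := supp (s l); rewrite mnmE s_k le_kl.
Qed.

Lemma supp_below_subU k i m : (i < k)%N -> supp_below k (m - U_(i))%MM = supp_below k m.
Proof.
move=> lt_ik; apply: eq_forallb => l; rewrite mnmBE mnm1E.
by case: (eqVneq i l) => [<-|_]; [rewrite leqNgt lt_ik | rewrite subn0].
Qed.

Lemma mdeg_subU i m : (0 < m i)%N -> mdeg (m - U_(i))%MM = (mdeg m).-1.
Proof.
move=> m_i; have le_Um : (U_(i) <= m)%MM.
  by apply/mnm_lepP => l; rewrite mnm1E; case: eqP => [<-|].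
by rewrite -{2}(submK le_Um) mdegD mdeg1 addn1.
Qed.

Lemma mcoeffXM i p m : ('X_i * p)@_m = if (0 < m i)%N then p@_(m - U_(i))%MM else 0.
Proof.
case: ifPn => m_i.
  have le_Um : (U_(i) <= m)%MM.
    by apply/mnm_lepP => l; rewrite mnm1E; case: eqP => [<-|].
  by rewrite -{1}(submK le_Um) addmC mulrC mcoeffMX.
apply/eqP; rewrite mcoeff_eq0 mulrC (perm_mem (msuppMX _ _)).
by apply/mapP => -[m' _ eq_m]; move: m_i; rewrite eq_m mnmDE mnm1E eqxx ?addn1 ?add1n.
Qed.

Lemma hcomp0 k : hcomp n k 0 = 1.
Proof.
apply/mpolyP => m; rewrite mcoeff_hcomp mcoeff1 mdeg_eq0.
case: eqP => [->|] //=; suff -> : supp_below k 0%MM by [].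
by apply/forallP => l; rewrite mnm0E eqxx implybT.
Qed.

Lemma supp_below_mulUn k i d : (i < k)%N -> supp_below k (U_(i) *+ d)%MM.
Proof.
move=> lt_ik; apply/forallP => l; apply/implyP => le_kl; rewrite mulmnE mnm1E.
by case: (eqVneq i l) => [eq_l|_]; [rewrite -eq_l leqNgt lt_ik in le_kl | rewrite mul0n].
Qed.

Lemma hcomp_neq0 i k d : (i < k)%N -> hcomp n k d != 0.
Proof.
move=> lt_ik; apply/eqP => /(congr1 (mcoeff (U_(i) *+ d)%MM)).
by rewrite mcoeff_hcomp mcoeff0 mdegMn mdeg1 mul1n eqxx supp_below_mulUn.
Qed.

Lemma msym_hcomp (s : {perm 'I_n}) k d : (forall l, (k <= s l) = (k <= l))%N ->
  msym s (hcomp n k d) = hcomp n k d.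
Proof.
by move=> s_k; apply/mpolyP => m; rewrite mcoeff_sym !mcoeff_hcomp mdeg_mperm supp_below_perm.
Qed.

Section Adjacent.
Variables i j : 'I_n.
Hypothesis ij : i.+1 = j :> nat.

Lemma tperm_adj_ge k l : k != j :> nat -> (k <= tperm i j l)%N = (k <= l)%N.
Proof. by move=> ne_kj; case: tpermP => [->|->|//]; lia. Qed.

Lemma msym_hcomp_adj k d : k != j :> nat -> msym (tperm i j) (hcomp n k d) = hcomp n k d.
Proof. by move=> ne_kj; apply: msym_hcomp => l; exact: tperm_adj_ge. Qed.

Lemma supp_below_tperm_adj m :
  supp_below i.+1 [multinom m (tperm i j l) | l < n] = (m i == 0%N) && supp_below i.+2 m.
Proof.
rewrite (supp_below_succ _ (esym ij)) mnmE tpermR supp_below_perm // => l.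
by apply: tperm_adj_ge; lia.
Qed.

Lemma hcomp_ddiff d : ('X_i - 'X_j) * hcomp n i.+2 d =
  hcomp n i.+1 d.+1 - msym (tperm i j) (hcomp n i.+1 d.+1).
Proof.
apply/mpolyP => m; rewrite mulrBl !mcoeffB !mcoeffXM mcoeff_sym !mcoeff_hcomp.
rewrite mdeg_mperm supp_below_tperm_adj (supp_below_succ _ (esym ij)).
have shift (l : 'I_n) : (l < i.+2)%N -> (0 < m l)%N ->
    (mdeg (m - U_(l))%MM == d) && supp_below i.+2 (m - U_(l))%MM =
    (mdeg m == d.+1) && supp_below i.+2 m.
  move=> lt_l m_l; rewrite supp_below_subU // mdeg_subU //.
  have : (m l <= mdeg m)%N by rewrite mdegE (bigD1 l) //= leq_addr.
  by case: (mdeg m) => [|e] le_m; [lia | rewrite eqSS].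
(* What remains is [0 < m i] - [0 < m j] = [m j == 0] - [m i == 0]. *)
case m_i: (0 < m i)%N; case m_j: (0 < m j)%N; rewrite ?shift //; try lia;
  case: (mdeg m == d.+1); case: (supp_below i.+2 m) => //=;
  move: m_i m_j; case: (m i); case: (m j) => //=.
Qed.

Lemma hcomp_adj_not_sym d : (0 < d)%N ->
  msym (tperm i j) (hcomp n i.+1 d) != hcomp n i.+1 d.
Proof.
move=> d_gt0; apply/eqP => /(congr1 (mcoeff (U_(i) *+ d)%MM)).
rewrite mcoeff_sym !mcoeff_hcomp mdeg_mperm supp_below_tperm_adj mulmnE mnm1E eqxx mul1n.
rewrite mdegMn mdeg1 mul1n eqxx !supp_below_mulUn //.
by have -> : (d == 0%N) = false by lia.
Qed.

End Adjacent.

Lemma mpolyX_ddiff i j e : i != j -> e i = (e j).+1 ->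
  ('X_i - 'X_j) * 'X_[(e - U_(i))%MM] = 'X_[e] - msym (tperm i j) 'X_[e] :> P.
Proof.
move=> ne_ij e_i; rewrite msymX tpermV mulrBl -!mpolyXD.
congr ('X_[_] - 'X_[_]); apply/mnmP => l; rewrite !mnmE.
  by case: eqP => [<-|]; [rewrite e_i add1n subn1 | rewrite subn0].
case: tpermP => [->|->|ne_li ne_lj]; rewrite ?eqxx.
- by rewrite eq_sym (negbTE ne_ij) e_i /= subn1.
- by rewrite (negbTE ne_ij) subn0 e_i.
- by rewrite (introF eqP (nesym ne_lj)) (introF eqP (nesym ne_li)) subn0.
Qed.

Lemma msym_mpolyX_tperm i j e : msym (tperm i j) 'X_[e] = 'X_[e] :> P -> e i = e j.
Proof.
rewrite msymX tpermV => /(congr1 (mcoeff e)); rewrite !mcoeffX eqxx.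
case: eqP => [/mnmP /(_ i)|_ /eqP]; last by rewrite eq_sym oner_eq0.
by rewrite mnmE tpermL.
Qed.

Lemma Xdiff_neq0 i j : i != j -> ('X_i - 'X_j : P) != 0.
Proof.
move=> ne_ij; apply/eqP => /(congr1 (mcoeff U_(i))).
rewrite mcoeffB !mcoeffX eqxx mcoeff0.
have -> : (U_(j) == U_(i))%MM = false.
  by apply/eqP => /mnmP /(_ i); rewrite !mnm1E eqxx eq_sym (negbTE ne_ij).
by rewrite subr0 => /eqP; rewrite oner_eq0.
Qed.

End CompleteHomogeneous.

Section CompleteHomogeneousMonomials.
Variable n' : nat.
Local Notation n := n'.+1.
Local Notation P := {mpoly int[n]}.
Implicit Types (c : nat -> nat) (x : nat).

Definition hprod c : P := \prod_(k < n) hcomp n k.+1 (c k).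

Definition upd c a v x := if x == a then v else c x.

Lemma eq_hprod c c' : (forall x, (x < n)%N -> c x = c' x) -> hprod c = hprod c'.
Proof. by move=> eq_c; apply: eq_bigr => k _; rewrite eq_c. Qed.

Lemma hprod_split c a : (a < n)%N -> hprod c = hcomp n a.+1 (c a) * hprod (upd c a 0).
Proof.
move=> lt_a; rewrite /hprod (bigD1 (inord a)) //= [in RHS](bigD1 (inord a)) //=.
rewrite /upd !inordK // eqxx hcomp0 mul1r; congr (_ * _); apply: eq_bigr => k ne_k.
by rewrite ifN_eq //; apply: contra ne_k => /eqP <-; rewrite inord_val.
Qed.

Lemma hprod_adj_sym c x : (x.+1 < n)%N -> c x = 0%N ->
  msym (adj_tr x) (hprod c) = hprod c.
Proof.
move=> lt_x c_x; rewrite /hprod rmorph_prod; apply: eq_bigr => k _.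
have [eq_k|ne_k] := eqVneq (k : nat) x; first by rewrite eq_k c_x hcomp0 rmorph1.
by apply: (msym_hcomp_adj (inord_succ lt_x)); rewrite inordK //; lia.
Qed.

Lemma hprod_neq0 c : hprod c != 0.
Proof. by apply/prodf_neq0 => k _; apply: (@hcomp_neq0 _ ord0). Qed.

End CompleteHomogeneousMonomials.

Arguments hprod {n'} c.

(** * Schubert polynomials *)

Section SchubertFamily.
Variable n' : nat.
Local Notation n := n'.+1.
Local Notation P := {mpoly int[n]}.
Variable S : {perm 'I_n} -> P.
Hypothesis HS : is_schubert_family S.
Implicit Types (u v : {perm 'I_n}) (x y : nat).

Local Notation dX x := ('X_(inord x) - 'X_(inord x.+1) : P).

Lemma dX_neq0 x : (x.+1 < n)%N -> dX x != 0.
Proof. by move=> lt_x; apply: Xdiff_neq0; exact: inord_neq_succ. Qed.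

Lemma schubert_descent u x : descent n (nat_perm u) x ->
  dX x * S (adj_tr x * u) = S u - msym (adj_tr x) (S u).
Proof.
move=> desc; have lt_x : (x.+1 < n)%N by case/andP: desc.
have := HS.2 u _ _ (inord_succ lt_x).
by rewrite /is_ddiff /simple_tr -/(adj_tr x) ell_adj_tr_descent // eqxx.
Qed.

Lemma schubert_ascent u x : (x.+1 < n)%N -> ~~ descent n (nat_perm u) x ->
  msym (adj_tr x) (S u) = S u.
Proof.
move=> lt_x /(ascent_of_not_descent lt_x) asc.
have := HS.2 u _ _ (inord_succ lt_x); rewrite /is_ddiff /simple_tr -/(adj_tr x).
have := ell_tperm_adj u (inord_succ lt_x); rewrite -/(adj_tr x) asc ltnNge (ltnW asc) addn0.
move=> ->; rewrite ifN ?mulr0; last by rewrite /=; lia.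
by move/eqP; rewrite eq_sym subr_eq0 => /eqP.
Qed.

Lemma schubert_eq0_id v : S v = 0 -> S 1%g = 0.
Proof.
have [k] := ubnP (ell v); elim: k v => // k IH v lt_v Sv0.
have [eq_v|[x desc]] := perm1_or_descent v; first by rewrite -eq_v.
have lt_x : (x.+1 < n)%N by case/andP: desc.
apply: (IH (adj_tr x * v)%g); first by have := ell_adj_tr_descent desc; lia.
have := schubert_descent desc; rewrite Sv0 rmorph0 subr0 => /eqP.
by rewrite mulf_eq0 (negbTE (dX_neq0 lt_x)) => /eqP.
Qed.

(* The invariant of the chain from w0 that always moves at the first drop of e;
   [mdeg e = ell u] makes the chain stop exactly at the identity. *)
Definition monomial_form u (e : 'X_{1..n}) :=
  [/\ S u = 'X_[e], stair n (fun x => e (inord x)), e (inord n') = 0%N & mdeg e = ell u].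

Lemma monomial_form_step u e : monomial_form u e -> (0 < ell u)%N ->
  exists x, [/\ descent n (nat_perm u) x & monomial_form (adj_tr x * u) (e - U_(inord x))%MM].
Proof.
move=> [Su st e_last deg] ell_pos.
have [k e_k] : exists k : 'I_n, (0 < e k)%N.
  apply/existsP; apply: contraTT ell_pos => /existsPn e0; rewrite -deg -eqn0Ngt mdeg_eq0.
  by apply/eqP/mnmP => k; have := e0 k; rewrite mnm0E; lia.
have [x [lt_x drop_x flat]] :=
  @stair_first_drop n _ k st (ltn_ord k) ltac:(by rewrite /= inord_val e_last).
have desc : descent n (nat_perm u) x.
  apply: contraT => /(schubert_ascent lt_x); rewrite Su => /msym_mpolyX_tperm.
  by rewrite drop_x; lia.
have lt_x' : (x < n)%N by lia.
exists x; split => //; split.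
- apply: (mulfI (dX_neq0 lt_x)).
  by rewrite schubert_descent // Su mpolyX_ddiff // inord_neq_succ.
- apply: eq_stair (stair_dec_first_drop st lt_x drop_x flat) => y lt_y.
  by rewrite mnmBE mnm1E inord_eq //; case: eqP => [->|]; lia.
- by rewrite mnmBE mnm1E inord_eq ?subn0 //; lia.
- by have := ell_adj_tr_descent desc; rewrite mdeg_subU; lia.
Qed.

Lemma monomial_form_w0 : monomial_form (w0 n) [multinom (n - k.+1)%N | k < n].
Proof.
split.
- by rewrite HS.1 /staircase mpolyXE_id; apply: eq_bigr => k _; rewrite mnmE.
- by move=> x lt_x; rewrite !mnmE !inordK //; lia.
- by rewrite mnmE inordK // subnn.
- by rewrite ell_w0 mdegE; apply: eq_bigr => k _; rewrite mnmE.
Qed.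

Lemma monomial_form_id_neq0 u e : monomial_form u e -> S 1%g != 0.
Proof.
have [k] := ubnP (ell u); elim: k u e => // k IH u e lt_u st.
have [ell0|ell_pos] := posnP (ell u).
  case: st => Su _ _ _; rewrite -(ell_eq0 ell0) Su.
  by apply/eqP => /(congr1 (mcoeff e)); rewrite mcoeffX eqxx mcoeff0 => /eqP; rewrite oner_eq0.
have [x [desc st']] := monomial_form_step st ell_pos.
by apply: IH st'; have := ell_adj_tr_descent desc; lia.
Qed.

Lemma schubert_neq0 v : S v != 0.
Proof.
by apply/eqP => /schubert_eq0_id; apply/eqP; exact: monomial_form_id_neq0 monomial_form_w0.
Qed.


Definition adj_symmetric (Z : P) := forall x, (x.+1 < n)%N -> msym (adj_tr x) Z = Z.

Definition hfactored u Z c := [/\ S u = Z * hprod c, Z != 0 & adj_symmetric Z].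

Lemma hfactored_factor u Z c x : hfactored u Z c -> (x.+1 < n)%N ->
  [/\ S u = Z * hprod (upd c x 0) * hcomp n x.+1 (c x), Z * hprod (upd c x 0) != 0
    & msym (adj_tr x) (Z * hprod (upd c x 0)) = Z * hprod (upd c x 0)].
Proof.
move=> [Su nZ sZ] lt_x; split.
- by rewrite Su (hprod_split _ (ltnW lt_x)) mulrA mulrAC.
- by rewrite mulf_neq0 // hprod_neq0.
- by rewrite msymM sZ // hprod_adj_sym // /upd eqxx.
Qed.

Lemma hfactored_ascent_eq0 u Z c x : hfactored u Z c -> (x.+1 < n)%N ->
  ~~ descent n (nat_perm u) x -> c x = 0%N.
Proof.
move=> st lt_x asc; have [Su nQ sQ] := hfactored_factor st lt_x.
case: (posnP (c x)) => // c_pos.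
have := hcomp_adj_not_sym (inord_succ lt_x) c_pos; rewrite inordK ?(ltnW lt_x) //.
by have := schubert_ascent lt_x asc; rewrite Su msymM sQ => /(mulfI nQ) ->; rewrite eqxx.
Qed.

Lemma hfactored_descent_gt0 u Z c x : hfactored u Z c -> descent n (nat_perm u) x -> (0 < c x)%N.
Proof.
move=> [Su nZ sZ] desc; have lt_x : (x.+1 < n)%N by case/andP: desc.
case: (posnP (c x)) => // c0; have := schubert_descent desc.
rewrite Su msymM sZ // hprod_adj_sym // subrr => /eqP.
by rewrite mulf_eq0 (negbTE (dX_neq0 lt_x)) (negbTE (schubert_neq0 _)).
Qed.

Lemma hfactored_move u Z c x : hfactored u Z c -> descent n (nat_perm u) x -> c x.+1 = 0%N ->
  hfactored (adj_tr x * u) Z (upd (upd c x 0) x.+1 (c x).-1).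
Proof.
move=> st desc c_x1; have lt_x : (x.+1 < n)%N by case/andP: desc.
have c_pos := hfactored_descent_gt0 st desc.
have [Su nQ sQ] := hfactored_factor st lt_x; have [_ nZ sZ] := st.
split=> //; apply: (mulfI (dX_neq0 lt_x)); rewrite schubert_descent // Su msymM sQ -mulrBr.
have := hcomp_ddiff (inord_succ lt_x) (c x).-1; rewrite inordK ?(ltnW lt_x) // prednK // => <-.
have -> : hprod (upd (upd c x 0) x.+1 (c x).-1) = hcomp n x.+2 (c x).-1 * hprod (upd c x 0).
  rewrite (hprod_split _ lt_x) {1}/upd eqxx; congr (_ * _); apply: eq_hprod => y _.
  by rewrite /upd; case: eqP => // ->; rewrite ifN_eq ?c_x1 //; lia.
by rewrite -mulrA [in RHS]mulrCA; congr (_ * _); rewrite mulrC mulrA.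
Qed.

Lemma hfactored_absorb_last u Z c :
  hfactored u Z c -> hfactored u (Z * hcomp n n (c n')) (upd c n' 0).
Proof.
move=> [Su nZ sZ]; split.
- by rewrite Su (hprod_split _ (ltnSn n')) mulrA.
- by rewrite mulf_neq0 // (@hcomp_neq0 _ ord0).
- move=> x lt_x; rewrite msymM sZ // (msym_hcomp_adj (inord_succ lt_x)) //.
  by rewrite inordK //; lia.
Qed.

Lemma hfactored_run_end u Z c x : hfactored u Z c ->
  descent n (nat_perm u) x -> ~~ descent n (nat_perm u) x.+1 ->
  exists Z' c', hfactored (adj_tr x * u) Z' c' /\ forall y, (y < x)%N -> c' y = c y.
Proof.
move=> st desc ndesc; have lt_x : (x.+1 < n)%N by case/andP: desc.
have [lt_x2|eq_x2] : (x.+2 < n)%N \/ x.+1 = n' by lia.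
  exists Z, (upd (upd c x 0) x.+1 (c x).-1); split.
    exact: hfactored_move st desc (hfactored_ascent_eq0 st lt_x2 ndesc).
  by move=> y lt_y; rewrite /upd !ifN_eq //; lia.
have st' := hfactored_absorb_last st.
exists (Z * hcomp n n (c n')), (upd (upd (upd c n' 0) x 0) x.+1 (upd c n' 0 x).-1); split.
  by apply: hfactored_move st' desc _; rewrite /upd eq_x2 eqxx.
by move=> y lt_y; rewrite /upd !ifN_eq //; lia.
Qed.

Lemma hfactored_not_blocked u Z c y : hfactored u Z c -> ~ blocked231 n (nat_perm u) y.
Proof.
(* Moving at y+1 creates a descent at y, where c vanishes since y was an ascent. *)
move=> st [asc lt_y2 desc1 ndesc2]; have lt_y : (y.+2 < n)%N by case/andP: desc1.
have ndesc : ~~ descent n (nat_perm u) y by apply/nandP; right; rewrite -leqNgt ltnW.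
have c_y := hfactored_ascent_eq0 st (ltnW lt_y) ndesc.
have [Z' [c' [st' eq_c']]] := hfactored_run_end st desc1 ndesc2.
have desc_y : descent n (nat_perm (adj_tr y.+1 * u)) y.
  rewrite /descent !nat_perm_adj_tr /swap_adj; try lia.
  by rewrite eqxx ifN_eq ?ifN_eq //; lia.
by have := hfactored_descent_gt0 st' desc_y; rewrite eq_c' // c_y.
Qed.

Lemma hfactored_no231 u Z c : hfactored u Z c -> ~ has231 n (nat_perm u).
Proof.
have [k] := ubnP (ell u); elim: k u Z c => // k IH u Z c lt_u st h231.
have [[y blocked]|[x [desc ndesc h231']]] := has231_reduce (@nat_perm_inj _ u) h231.
  exact: hfactored_not_blocked st blocked.
have [Z' [c' [st' _]]] := hfactored_run_end st desc ndesc.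
apply: (IH _ Z' c' _ st'); first by have := ell_adj_tr_descent desc; lia.
have lt_x : (x.+1 < n)%N by case/andP: desc.
by apply: eq_has231 h231' => y lt_y; rewrite /= nat_perm_adj_tr.
Qed.

End SchubertFamily.

Theorem lemma20 (n : nat) (S : {perm 'I_n} -> {mpoly int[n]})
  (HS : is_schubert_family S) (w : {perm 'I_n}) :
  contains231 w -> ~ is_complete_hom_monomial (S w).
Proof.
case: n S HS w => [|n'] S HS w h231 [a Sw]; first by case: h231 => -[[]].
move/contains231E: h231; apply: (hfactored_no231 HS (Z := 1) (c := fun k => a (inord k))).
split; [|exact: oner_neq0 | by move=> x _; rewrite msym1].
by rewrite mul1r Sw; apply: eq_bigr => k _; rewrite inord_val.
Qed.
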